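(* Let $(\Omega,\mathcal{F},\mathbb{P})$ be a probability space, $\mathcal{G}\subseteq\mathcal{F}$ a sub-$\sigma$-algebra, and $m\in\mathbb{N}$. Let $X:\Omega\to\mathcal{M}_{\mathcal{I}}^{(m)}$ be $\mathcal{G}$-measurable and almost surely bounded, with $X(\omega)=\langle [a_k(\omega),a_k(\omega)]\rangle_{0\le k\le m}$ (degenerate intervals) for all $\omega\in\Omega$, and let $Y:\Omega\to\mathcal{M}_{\mathcal{I}}^{(m)}$ be a random variable. Then $\mathbb{E}[X\otimes Y\mid\mathcal{G}]=X\otimes\mathbb{E}[Y\mid\mathcal{G}]$ almost surely.
   Context: The interval semiring $\mathcal{I}$ has carrier $\{[a,b]:a\le b\}$, $[a,b]+_{\mathcal{I}}[c,d]=[a+c,b+d]$, $[a,b]\cdot_{\mathcal{I}}[c,d]=[\min S,\max S]$ with $S=\{ac,ad,bc,bd\}$. The moment semiring $\mathcal{M}_{\mathcal{I}}^{(m)}$ consists of vectors $\langle u_k\rangle_{0\le k\le m}$ of intervals with pointwise addition $\oplus$ and product $\langle u_k\rangle\otimes\langle v_k\rangle=\big\langle \sum_{i=0}^k\binom{k}{i}\times(u_i\cdot_{\mathcal{I}} v_{k-i})\big\rangle_{0\le k\le m}$ (sums in $+_{\mathcal{I}}$, $n\times u$ meaning the $n$-fold $+_{\mathcal{I}}$-sum of $u$). (Conditional) expectations of $\mathcal{M}_{\mathcal{I}}^{(m)}$-valued random variables are taken componentwise on the interval endpoints (for random variables whose endpoints are integrable). *)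

From HB Require Import structures.
From mathcomp Require Import all_boot all_order all_algebra.
From mathcomp Require Import all_classical all_reals all_analysis.
Set Implicit Arguments. Unset Strict Implicit. Unset Printing Implicit Defensive.
Import Order.TTheory GRing.Theory Num.Theory.
Local Open Scope classical_set_scope.
Local Open Scope ring_scope.

Section IntervalSemiring.
Variable R : realType.

(* An interval [a,b] is represented by the pair (a,b); the carrier of the
   interval semiring consists of the pairs with a <= b. *)
Definition itv_ok (u : R * R) : Prop := u.1 <= u.2.

Definition izero : R * R := (0, 0).

Definition iadd (u v : R * R) : R * R := (u.1 + v.1, u.2 + v.2).

Definition imul (u v : R * R) : R * R :=
  (Num.min (Num.min (u.1 * v.1) (u.1 * v.2)) (Num.min (u.2 * v.1) (u.2 * v.2)),
   Num.max (Num.max (u.1 * v.1) (u.1 * v.2)) (Num.max (u.2 * v.1) (u.2 * v.2))).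

Definition inmul (n : nat) (u : R * R) : R * R := iter n (iadd u) izero.

Definition mom (m : nat) := 'I_m.+1 -> R * R.

Definition mom_add (m : nat) (u v : mom m) : mom m := fun k => iadd (u k) (v k).

Definition mom_mul (m : nat) (u v : mom m) : mom m := fun k =>
  foldr iadd izero
    [seq inmul 'C(k, i) (imul (u (inord i)) (v (inord (k - i)))) | i <- iota 0 k.+1].

End IntervalSemiring.

Section CondExp.
Context {d : measure_display} {T : measurableType d} {R : realType}.
Local Open Scope ereal_scope.

Definition G_measurable (G : set (set T)) (f : T -> R) : Prop :=
  forall B : set R, measurable B -> G (f @^-1` B).

Definition is_sub_sigma_alg (G : set (set T)) : Prop :=
  sigma_algebra setT G /\ G `<=` measurable.

Definition is_cond_exp (P : probability T R) (G : set (set T)) (Y Z : T -> R)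
  : Prop :=
  [/\ G_measurable G Z,
      P.-integrable setT (EFin \o Z) &
      forall A, G A -> \int[P]_(x in A) (Z x)%:E = \int[P]_(x in A) (Y x)%:E].

Definition is_cond_exp_mom (m : nat) (P : probability T R) (G : set (set T))
  (Y Z : T -> mom R m) : Prop :=
  forall k : 'I_m.+1,
    is_cond_exp P G (fun w => (Y w k).1) (fun w => (Z w k).1) /\
    is_cond_exp P G (fun w => (Y w k).2) (fun w => (Z w k).2).

End CondExp.

From HB Require Import structures.
From mathcomp Require Import all_boot all_order all_algebra.
From mathcomp Require Import all_classical all_reals all_analysis.
From mathcomp Require Import measurable_realfun lra.
Import Order.TTheory GRing.Theory Num.Theory.
Local Open Scope classical_set_scope.
Local Open Scope ring_scope.

(* For a degenerate interval, [a,a] . [c,d] = [a^+ c - a^- d, a^+ d - a^- c]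
   when c <= d.  Hence each endpoint of the k-th component of X (x) Y is a
   finite sum of products of bounded G-measurable factors (binomial
   coefficients, a_i^+ and a_i^-) with endpoints of Y.  Conditional
   expectation is additive and pulls out bounded G-measurable factors (to see
   the latter, approximate the factor uniformly by G-step functions), so the
   endpoints of E[X (x) Y | G] are given a.s. by the same expressions in the
   endpoints of E[Y | G].  By monotonicity of conditional expectation these
   endpoints are a.s. ordered, so the expressions are exactly the endpoints of
   X (x) E[Y | G].  Since a is only a.s. bounded, the pull-out is applied to
   its truncation, which agrees with a a.s. *)

Section degenerate_product.
Context {R : realType}.

Lemma imul_degenerate (a : R) (v : R * R) : itv_ok v ->
  imul (a, a) v =
    (Num.max a 0 * v.1 - Num.max (- a) 0 * v.2,
     Num.max a 0 * v.2 - Num.max (- a) 0 * v.1).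
Proof.
rewrite /itv_ok /imul /= !minxx !maxxx => v12.
have [a0|a0] := lerP 0 a.
  rewrite (max_idPr (_ : - a <= 0)) ?oppr_le0 // !mul0r !subr0.
  by rewrite (min_idPl _) ?(max_idPr _) // ler_wpM2l.
rewrite (max_idPl (_ : 0 <= - a)) ?oppr_ge0 ?ltW // !mul0r !sub0r !mulNr !opprK.
by rewrite (min_idPr _) ?(max_idPl _) // ler_wnM2l // ltW.
Qed.

Lemma foldr_iadd (s : seq (R * R)) :
  foldr (@iadd R) (izero R) s = (\sum_(u <- s) u.1, \sum_(u <- s) u.2).
Proof. by elim: s => [|u s IH]; rewrite ?big_nil ?big_cons //= IH. Qed.

Lemma inmulE n (u : R * R) : inmul n u = (n%:R * u.1, n%:R * u.2).
Proof.
rewrite !mulr_natl; elim: n => [|n IH] //=.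
by rewrite IH /iadd /= !mulrS.
Qed.

Context {m : nat}.

(* Lower endpoint of the k-th component of <[a_i, a_i]> (x) v when u and w
   are the lower and upper endpoints of v; swapping u and w gives the upper
   endpoint. *)
Definition mom_endpoint (a u w : 'I_m.+1 -> R) (k : 'I_m.+1) : R :=
  \sum_(i <- iota 0 k.+1) 'C(k, i)%:R *
    (Num.max (a (inord i)) 0 * u (inord (k - i))
     - Num.max (- a (inord i)) 0 * w (inord (k - i))).

Lemma mom_mul_degenerate (a : 'I_m.+1 -> R) (v : mom R m) k :
  (forall l, itv_ok (v l)) ->
  mom_mul (fun i => (a i, a i)) v k =
    (mom_endpoint a (fun l => (v l).1) (fun l => (v l).2) k,
     mom_endpoint a (fun l => (v l).2) (fun l => (v l).1) k).
Proof.
move=> vok; rewrite /mom_mul foldr_iadd !big_map.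
by congr pair; apply: eq_bigr => i _; rewrite inmulE imul_degenerate.
Qed.

End degenerate_product.

Lemma normr_max0_le {R : realDomainType} (y : R) : `|Num.max y 0| <= `|y|.
Proof. by case: (lerP 0 y) => _; rewrite ?normr0. Qed.

Definition clampr {R : realDomainType} (C x : R) := Num.max (- C) (Num.min x C).

Lemma normr_clampr_le {R : realDomainType} (C x : R) : 0 <= C -> `|clampr C x| <= C.
Proof.
move=> C0; rewrite ler_norml /clampr le_max lexx ge_max ge_min lexx orbT /=.
by rewrite andbT (le_trans _ C0) // oppr_le0.
Qed.

Lemma clampr_id {R : realDomainType} (C x : R) : `|x| <= C -> clampr C x = x.
Proof.
rewrite ler_norml => /andP[Cx xC].
by rewrite /clampr (min_idPl xC) (max_idPr Cx).
Qed.

Section integrable_bounded.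
Context {d : measure_display} {T : measurableType d} {R : realType}.
Variable mu : {measure set T -> \bar R}.

Lemma integrable_bounded_mulr {A : set T} {h D : T -> R} {M : R} :
  measurable A -> measurable_fun [set: T] h -> (forall x, `|h x| <= M) ->
  mu.-integrable A (EFin \o D) -> mu.-integrable A (fun x => (h x * D x)%:E).
Proof.
move=> mA mh hM iD.
have hb : [bounded h x | x in A].
  exists M; split=> [|y My x _]; first exact: num_real.
  exact: le_trans (hM x) (ltW My).
have mhA := measurable_funS measurableT (subsetT A) mh.
apply: (eq_integrable mA _ _ _ (integrableMr mA mhA hb iD)) => x _.
by rewrite /= EFinM.
Qed.

End integrable_bounded.

Section sub_sigma_algebra.
Context {d : measure_display} {T : measurableType d} {R : realType}.
Context {G : set (set T)} (HG : is_sub_sigma_alg G).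
Local Notation TG := (g_sigma_algebraType G).

Lemma g_sigma_algebraE : @measurable _ TG = G.
Proof. exact: measurable_g_measurableTypeE HG.1. Qed.

Lemma sub_sigma_measurable {A} : G A -> measurable A.
Proof. exact: HG.2. Qed.

Lemma sub_sigmaI {A B} : G A -> G B -> G (A `&` B).
Proof. by rewrite -g_sigma_algebraE; exact: measurableI. Qed.

Lemma G_measurableP (f : T -> R) :
  G_measurable G f <-> measurable_fun [set: TG] f.
Proof.
split=> [Gf _ B mB|mf B mB]; first by rewrite setTI g_sigma_algebraE; exact: Gf.
by have := mf measurableT B mB; rewrite setTI g_sigma_algebraE.
Qed.

Lemma G_measurable_fun {f : T -> R} :
  G_measurable G f -> measurable_fun [set: T] f.
Proof. by move=> Gf _ B mB; rewrite setTI; exact/sub_sigma_measurable/Gf. Qed.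

Lemma G_measurable_lt {f g : T -> R} :
  G_measurable G f -> G_measurable G g -> G [set x | f x < g x].
Proof.
move=> /G_measurableP mf /G_measurableP mg.
have := measurable_fun_ltr mf mg measurableT (_ : measurable [set true]).
by rewrite setTI g_sigma_algebraE preimage_true; apply.
Qed.

Lemma G_step_approx {b : T -> R} {C e : R} :
  G_measurable G b -> (forall x, `|b x| <= C) -> 0 < e ->
  exists n (r : 'I_n -> R) (L : 'I_n -> set T), (forall j, G (L j)) /\
    forall x, `|b x - \sum_(j < n) r j * \1_(L j) x| <= e.
Proof.
move=> Gb bC e0.
pose t x := Num.truncn ((b x + C) / e).
exists (Num.truncn (C *+ 2 / e)).+1, (fun j => j%:R * e - C).
exists (fun j => b @^-1` `[j%:R * e - C, j.+1%:R * e - C[).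
split=> [j|x]; first exact: Gb.
have [bxl bxr] : - C <= b x /\ b x <= C.
  by move: (bC x); rewrite ler_norml => /andP.
have y0 : 0 <= (b x + C) / e by rewrite divr_ge0 ?(ltW e0) // -lerBlDr sub0r.
have tn : (t x < (Num.truncn (C *+ 2 / e)).+1)%N.
  rewrite ltnS truncn_le_nat; apply: le_lt_trans (truncnS_gt _).
  by rewrite ler_pM2r ?invr_gt0 // mulr2n lerD2r.
have memL j : (x \in b @^-1` `[j%:R * e - C, j.+1%:R * e - C[) = (t x == j).
  rewrite truncn_eq // ler_pdivlMr // ltr_pdivrMr //.
  by rewrite /preimage mem_setE unfold_in /= !bnd_simp lerBlDr ltrBrDr.
rewrite (bigD1 (Ordinal tn)) //= big1 => [|j jt]; last first.
  rewrite indicE memL; case: eqP => [tj|_]; last by rewrite mulr0.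
  by move: jt; rewrite -val_eqE /= tj eqxx.
rewrite indicE memL eqxx mulr1 addr0.
have /andP[tl tr] := truncn_itv y0.
rewrite ler_pdivlMr // in tl; rewrite ltr_pdivrMr // in tr.
rewrite ler_norml; apply/andP; split; rewrite -/(t x); lra.
Qed.

End sub_sigma_algebra.

Definition cond_exp_of {d : measure_display} {T : measurableType d}
    {R : realType} (P : probability T R) (G : set (set T)) (Y Z : T -> R) :=
  P.-integrable setT (EFin \o Y) /\ is_cond_exp P G Y Z.

Definition cond_mean_zero {d : measure_display} {T : measurableType d}
    {R : realType} (P : probability T R) (G : set (set T)) (D : T -> R) :=
  forall A, G A -> (\int[P]_(x in A) (D x)%:E = 0)%E.

Section conditional_expectation.
Context {d : measure_display} {T : measurableType d} {R : realType}.
Context (P : probability T R) {G : set (set T)} (HG : is_sub_sigma_alg G).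
Local Open Scope ereal_scope.

Let integrable_on {A} {f : T -> \bar R} :
  G A -> P.-integrable setT f -> P.-integrable A f.
Proof.
by move=> GA; apply: integrableS measurableT (sub_sigma_measurable HG GA) _.
Qed.

Let integral_addr {A} (f g : T -> R) : measurable A ->
  P.-integrable A (EFin \o f) -> P.-integrable A (EFin \o g) ->
  \int[P]_(x in A) ((f \+ g)%R x)%:E =
    \int[P]_(x in A) (f x)%:E + \int[P]_(x in A) (g x)%:E.
Proof. by move=> mA iF iG; rewrite -integralD_EFin. Qed.

Let integral_subr {A} (f g : T -> R) : measurable A ->
  P.-integrable A (EFin \o f) -> P.-integrable A (EFin \o g) ->
  \int[P]_(x in A) ((f \- g)%R x)%:E =
    \int[P]_(x in A) (f x)%:E - \int[P]_(x in A) (g x)%:E.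
Proof. by move=> mA iF iG; rewrite -integralB_EFin. Qed.

(* On E = {Z2 < Z1}, a set of G, the positive function Z1 - Z2 has a
   nonpositive integral, so E is negligible. *)
Lemma G_integral_le_ae {Z1 Z2 : T -> R} :
  G_measurable G Z1 -> G_measurable G Z2 ->
  P.-integrable setT (EFin \o Z1) -> P.-integrable setT (EFin \o Z2) ->
  (forall A, G A ->
    \int[P]_(x in A) (Z1 x)%:E <= \int[P]_(x in A) (Z2 x)%:E) ->
  {ae P, forall x, (Z1 x <= Z2 x)%R}.
Proof.
move=> GZ1 GZ2 iZ1 iZ2 le12.
pose E := [set x | Z2 x < Z1 x]%R.
have GE : G E := G_measurable_lt HG GZ2 GZ1.
have mE := sub_sigma_measurable HG GE.
have mZE : measurable_fun E (fun x => (Z1 x - Z2 x)%:E).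
  apply/measurable_EFinP/measurable_funB;
    exact: measurable_funS (G_measurable_fun HG _).
have : \int[P]_(x in E) `|(Z1 x - Z2 x)%:E| = 0.
  apply/eqP; rewrite eq_le integral_ge0 ?andbT //.
  under eq_integral => x /set_mem Ex do
    rewrite abse_EFin ger0_norm ?subr_ge0 ?(ltW Ex) // EFinB.
  by rewrite integralB ?sube_le0 ?le12 //; exact: integrable_on.
move/(ae_eq_integral_abs P mE mZE); apply: filterS => x /= Ex0.
rewrite leNgt; apply/negP => Ex.
by move/eqP: (Ex0 Ex); rewrite eqe subr_eq0 gt_eqF.
Qed.

Lemma is_cond_exp_le {Y1 Y2 Z1 Z2 : T -> R} :
  P.-integrable setT (EFin \o Y1) -> P.-integrable setT (EFin \o Y2) ->
  (forall x, Y1 x <= Y2 x)%R ->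
  is_cond_exp P G Y1 Z1 -> is_cond_exp P G Y2 Z2 ->
  {ae P, forall x, (Z1 x <= Z2 x)%R}.
Proof.
move=> iY1 iY2 Y12 [GZ1 iZ1 eZ1] [GZ2 iZ2 eZ2].
apply: G_integral_le_ae => // A GA; rewrite eZ1 // eZ2 //.
apply: le_integral; try exact: integrable_on.
- exact: (sub_sigma_measurable HG GA).
- by move=> x _; rewrite lee_fin.
Qed.

Lemma is_cond_exp_unique {Y Z1 Z2 : T -> R} :
  is_cond_exp P G Y Z1 -> is_cond_exp P G Y Z2 ->
  {ae P, forall x, Z1 x = Z2 x}.
Proof.
move=> [GZ1 iZ1 eZ1] [GZ2 iZ2 eZ2].
have le12 : {ae P, forall x, (Z1 x <= Z2 x)%R}.
  by apply: G_integral_le_ae => // A GA; rewrite eZ1 // eZ2.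
have le21 : {ae P, forall x, (Z2 x <= Z1 x)%R}.
  by apply: G_integral_le_ae => // A GA; rewrite eZ1 // eZ2.
apply: filterS2 le12 le21 => x Z12 Z21.
by apply/eqP; rewrite eq_le Z12 Z21.
Qed.

Lemma is_cond_exp_ae_eq {Y1 Y2 Z : T -> R} :
  measurable_fun setT Y1 -> measurable_fun setT Y2 ->
  {ae P, forall x, Y1 x = Y2 x} ->
  is_cond_exp P G Y1 Z -> is_cond_exp P G Y2 Z.
Proof.
move=> mY1 mY2 Y12 [GZ iZ eZ]; split => // A GA; rewrite eZ //.
have mA := sub_sigma_measurable HG GA.
apply: ae_eq_integral => //.
- exact/measurable_EFinP/(measurable_funS measurableT (subsetT A)).
- exact/measurable_EFinP/(measurable_funS measurableT (subsetT A)).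
- by apply: filterS Y12 => x /= ->.
Qed.

Lemma cond_exp_of0 : cond_exp_of P G (cst 0%R) (cst 0%R).
Proof.
split; first exact: integrable0.
by split=> //; [exact/(G_measurableP HG)/measurable_cst | exact: integrable0].
Qed.

Lemma cond_exp_ofD {Y1 Y2 Z1 Z2 : T -> R} :
  cond_exp_of P G Y1 Z1 -> cond_exp_of P G Y2 Z2 ->
  cond_exp_of P G (Y1 \+ Y2)%R (Z1 \+ Z2)%R.
Proof.
move=> [iY1 [GZ1 iZ1 eZ1]] [iY2 [GZ2 iZ2 eZ2]].
have EFin_addr (f g : T -> R) : EFin \o (f \+ g)%R = (EFin \o f) \+ (EFin \o g).
  by apply/funext => x; rewrite /= EFinD.
split; first by rewrite EFin_addr; exact: integrableD.
split; last 1 first.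
- move=> A GA; have mA := sub_sigma_measurable HG GA.
  by rewrite !integral_addr ?eZ1 ?eZ2 //; exact: integrable_on.
- by apply/(G_measurableP HG)/measurable_funD; exact/(G_measurableP HG).
- by rewrite EFin_addr; exact: integrableD.
Qed.

Lemma cond_exp_of_sum {I : Type} (s : seq I) {Yf Zf : I -> T -> R} :
  (forall i, cond_exp_of P G (Yf i) (Zf i)) ->
  cond_exp_of P G (fun x => \sum_(i <- s) Yf i x)%R
                  (fun x => \sum_(i <- s) Zf i x)%R.
Proof.
move=> cYZ; elim: s => [|i s IH].
  have sum_nil (F : I -> T -> R) :
      (fun x => \sum_(j <- [::]) F j x)%R = cst 0%R.
    by apply/funext => x; rewrite big_nil.
  by rewrite !sum_nil; exact: cond_exp_of0.
have sum_cons (F : I -> T -> R) : (fun x => \sum_(j <- i :: s) F j x)%R =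
    (F i \+ fun x => \sum_(j <- s) F j x)%R.
  by apply/funext => x; rewrite big_cons.
by rewrite !sum_cons; exact: cond_exp_ofD.
Qed.

Lemma cond_mean_zero_step_mul {D : T -> R} {n} {r : 'I_n -> R}
    {L : 'I_n -> set T} :
  P.-integrable setT (EFin \o D) -> cond_mean_zero P G D ->
  (forall j, G (L j)) ->
  cond_mean_zero P G (fun x => (\sum_(j < n) r j * \1_(L j) x) * D x)%R.
Proof.
move=> iD D0 GL A GA; have mA := sub_sigma_measurable HG GA.
have iL j : P.-integrable A (fun x => (\1_(L j) x * D x)%:E).
  apply: (integrable_bounded_mulr P mA) (integrable_on GA iD).
    exact/measurable_indic/(sub_sigma_measurable HG (GL j)).
  by move=> x; rewrite indicE; case: (x \in L j); rewrite ?normr1 ?normr0.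
under eq_integral do rewrite mulr_suml -sumEFin.
rewrite integral_sum //; last first.
  by move=> j; under eq_fun do rewrite -mulrA EFinM; exact: integrableZl.
apply: big1 => j _; under eq_integral do rewrite -mulrA EFinM.
rewrite integralZl //.
have -> : \int[P]_(x in A) (\1_(L j) x * D x)%:E =
    \int[P]_(x in A `&` L j) (D x)%:E.
  rewrite integral_mkcondr; apply: eq_integral => x _.
  by rewrite patchE indicE; case: (x \in L j); rewrite ?mul1r ?mul0r.
by rewrite D0 ?mule0 //; exact: sub_sigmaI.
Qed.

(* If c is a G-step function with |b - c| <= e, then the integral of b D over
   A equals that of (b - c) D, which is at most e times that of |D|. *)
Lemma cond_mean_zeroM {b D : T -> R} {C : R} :
  G_measurable G b -> (forall x, `|b x| <= C)%R ->
  P.-integrable setT (EFin \o D) -> cond_mean_zero P G D ->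
  cond_mean_zero P G (b \* D)%R.
Proof.
move=> Gb bC iD D0 A GA.
have mA := sub_sigma_measurable HG GA.
have mb := G_measurable_fun HG Gb.
have iDA := integrable_on GA iD.
have mDA : measurable_fun A D.
  apply: measurable_funS (subsetT A) _ => //.
  exact/measurable_EFinP/(measurable_int _ iD).
have Kfin : \int[P]_(x in A) `|(D x)%:E| \is a fin_num.
  by rewrite ge0_fin_numE ?integral_ge0 //; exact: (integrableP _ _ _ iDA).2.
set K := \int[P]_(x in A) `|(D x)%:E| in Kfin *.
suff : `|\int[P]_(x in A) ((b \* D)%R x)%:E| <= 0.
  by move=> h; apply/eqP; rewrite -abse_eq0 eq_le h abse_ge0.
apply/lee_addgt0Pr => eps eps0; rewrite add0e.
pose e := (eps / (fine K + 1))%R.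
have e0 : (0 < e)%R by rewrite divr_gt0 // ltr_wpDl // fine_ge0 ?integral_ge0.
have [n [r [L [GL bc]]]] := G_step_approx Gb bC e0.
pose c x := (\sum_(j < n) r j * \1_(L j) x)%R.
have mc : measurable_fun setT c.
  apply: measurable_sum => j.
  apply: measurable_funM; first exact: measurable_cst.
  exact/measurable_indic/(sub_sigma_measurable HG (GL j)).
have cC x : (`|c x| <= C + e)%R.
  rewrite -[c x](subKr (b x)); apply: le_trans (ler_normB _ _) _.
  exact: lerD.
have icD := integrable_bounded_mulr P mA mc cC iDA.
have ibD := integrable_bounded_mulr P mA mb bC iDA.
have -> : \int[P]_(x in A) ((b \* D)%R x)%:E =
    \int[P]_(x in A) ((b x - c x) * D x)%:E.
  rewrite -[LHS]sube0 -(cond_mean_zero_step_mul (r := r) iD D0 GL A GA).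
  rewrite -integralB_EFin //.
  by apply: eq_integral => x _; rewrite -EFinB mulrBl.
have mbcD : measurable_fun A (fun x => ((b x - c x) * D x)%:E).
  apply/measurable_EFinP/measurable_funM => //.
  by apply: measurable_funB; exact: measurable_funS measurableT (subsetT A) _.
apply: le_trans (le_abse_integral _ mA mbcD) _.
apply: (@le_trans _ _ (\int[P]_(x in A) (e%:E * `|(D x)%:E|))).
  apply: ge0_le_integral => //.
  - exact: measurableT_comp.
  - exact/measurable_funeM/measurableT_comp/measurable_EFinP.
  - move=> x _; rewrite /= -EFinM lee_fin normrM.
    by apply: ler_wpM2r => //; rewrite -normrN opprB.
rewrite ge0_integralZl_EFin ?(ltW e0) //; last first.
  exact/measurableT_comp/measurable_EFinP.
rewrite -[X in _ * X <= _](fineK Kfin) -EFinM lee_fin /e mulrAC.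
rewrite ler_pdivrMr ?ltr_wpDl ?fine_ge0 ?integral_ge0 //.
by rewrite mulrDr mulr1 lerDl ltW.
Qed.

Lemma cond_exp_ofM {b Y Z : T -> R} {C : R} :
  G_measurable G b -> (forall x, `|b x| <= C)%R ->
  cond_exp_of P G Y Z -> cond_exp_of P G (b \* Y)%R (b \* Z)%R.
Proof.
move=> Gb bC [iY [GZ iZ eZ]].
have mb := G_measurable_fun HG Gb.
have iZY : P.-integrable setT (EFin \o (Z \- Y)%R).
  rewrite (_ : EFin \o _ = (EFin \o Z) \- (EFin \o Y)).
    exact: integrableB.
  by apply/funext => x; rewrite /= EFinB.
have ZY0 : cond_mean_zero P G (Z \- Y)%R.
  move=> A GA; have mA := sub_sigma_measurable HG GA.
  rewrite integral_subr ?eZ ?subee //; try exact: integrable_on.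
  exact/integrable_fin_num/integrable_on.
have ibY := integrable_bounded_mulr P measurableT mb bC iY.
have ibZ := integrable_bounded_mulr P measurableT mb bC iZ.
split=> //; split=> //.
  by apply/(G_measurableP HG)/measurable_funM; exact/(G_measurableP HG).
move=> A GA; have mA := sub_sigma_measurable HG GA.
have := cond_mean_zeroM Gb bC iZY ZY0 A GA.
rewrite (_ : (b \* (Z \- Y))%R = (b \* Z \- b \* Y)%R); last first.
  by apply/funext => x; rewrite /= mulrBr.
rewrite integral_subr //; try exact: integrable_on.
have bYfin : \int[P]_(x in A) ((b \* Y)%R x)%:E \is a fin_num.
  exact/integrable_fin_num/integrable_on.
by move=> ZY; rewrite -[LHS](subeK _ bYfin) ZY add0e.
Qed.

Lemma cond_exp_ofB {Y1 Y2 Z1 Z2 : T -> R} :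
  cond_exp_of P G Y1 Z1 -> cond_exp_of P G Y2 Z2 ->
  cond_exp_of P G (Y1 \- Y2)%R (Z1 \- Z2)%R.
Proof.
move=> c1 c2.
have Gm1 : G_measurable G (fun=> (-1 : R)%R).
  exact/(G_measurableP HG)/measurable_cst.
have m1 (x : T) : (`|(-1)%R| <= 1 :> R)%R by rewrite normrN normr1.
have := cond_exp_ofD c1 (cond_exp_ofM Gm1 m1 c2).
have sub_def (f g : T -> R) : (f \+ (fun=> (-1)%R) \* g)%R = (f \- g)%R.
  by apply/funext => x; rewrite /= mulN1r.
by rewrite !sub_def.
Qed.

End conditional_expectation.

Section moment_cond_exp.
Context {d : measure_display} {T : measurableType d} {R : realType}.
Context (P : probability T R) {G : set (set T)} (HG : is_sub_sigma_alg G).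
Context {m : nat}.

Lemma measurable_mom_endpoint (a : 'I_m.+1 -> T -> R)
    (U V : T -> 'I_m.+1 -> R) k :
  (forall i, measurable_fun setT (a i)) ->
  (forall l, measurable_fun setT (U^~ l)) ->
  (forall l, measurable_fun setT (V^~ l)) ->
  measurable_fun setT (fun x => mom_endpoint (a^~ x) (U x) (V x) k).
Proof.
move=> ma mU mV; apply: measurable_sum => i.
apply: measurable_funM; first exact: measurable_cst.
apply: measurable_funB; apply: measurable_funM => //.
  exact: measurable_maxr.
by apply: measurable_maxr => //; exact: measurable_funN.
Qed.

Lemma cond_exp_of_mom_endpoint {a : 'I_m.+1 -> T -> R} {C : R}
    {U V U' V' : T -> 'I_m.+1 -> R} {k} :
  (forall i, G_measurable G (a i)) -> (forall i x, `|a i x| <= C) ->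
  (forall l, cond_exp_of P G (U^~ l) (U'^~ l)) ->
  (forall l, cond_exp_of P G (V^~ l) (V'^~ l)) ->
  cond_exp_of P G (fun x => mom_endpoint (a^~ x) (U x) (V x) k)
                  (fun x => mom_endpoint (a^~ x) (U' x) (V' x) k).
Proof.
move=> Ga aC cU cV.
have Gpos i : G_measurable G (fun x => Num.max (a i x) 0).
  by apply/(G_measurableP HG)/measurable_maxr => //; exact/(G_measurableP HG).
have Gneg i : G_measurable G (fun x => Num.max (- a i x) 0).
  apply/(G_measurableP HG)/measurable_maxr => //.
  exact/measurable_funN/(G_measurableP HG).
have Gbin i : G_measurable G (fun=> 'C(k, i)%:R : R).
  exact/(G_measurableP HG)/measurable_cst.
pose F (W1 W2 : T -> 'I_m.+1 -> R) i x := 'C(k, i)%:R *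
  (Num.max (a (inord i) x) 0 * W1 x (inord (k - i))
   - Num.max (- a (inord i) x) 0 * W2 x (inord (k - i))).
suff cF i : cond_exp_of P G (F U V i) (F U' V' i).
  exact: (cond_exp_of_sum P HG (iota 0 k.+1) cF).
apply: (cond_exp_ofM P HG (Gbin i) (fun x => lexx _)).
apply: (cond_exp_ofB P HG).
  apply: (cond_exp_ofM P HG (Gpos _) _ (cU _)) => x.
  exact: le_trans (normr_max0_le _) (aC _ x).
apply: (cond_exp_ofM P HG (Gneg _) _ (cV _)) => x.
by apply: le_trans (normr_max0_le _) _; rewrite normrN.
Qed.

Lemma is_cond_exp_mom_endpoint {a : 'I_m.+1 -> T -> R} {C : R}
    {U V U' V' : T -> 'I_m.+1 -> R} {Wk : T -> R} {k} :
  (forall i, G_measurable G (a i)) -> {ae P, forall x i, `|a i x| <= C} ->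
  (forall l, cond_exp_of P G (U^~ l) (U'^~ l)) ->
  (forall l, cond_exp_of P G (V^~ l) (V'^~ l)) ->
  is_cond_exp P G (fun x => mom_endpoint (a^~ x) (U x) (V x) k) Wk ->
  {ae P, forall x, Wk x = mom_endpoint (a^~ x) (U' x) (V' x) k}.
Proof.
move=> Ga aC cU cV hW.
pose a' i x := clampr `|C| (a i x).
have Ga' i : G_measurable G (a' i).
  apply/(G_measurableP HG)/measurable_maxr; first exact: measurable_cst.
  by apply: measurable_minr; [exact/(G_measurableP HG)|exact: measurable_cst].
have a'C i x : `|a' i x| <= `|C| by exact: normr_clampr_le.
have a'a : {ae P, forall x, a'^~ x = a^~ x}.
  apply: filterS aC => x axC; apply/funext => i.
  by apply: clampr_id; apply: le_trans (axC i) (ler_norm C).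
have measurable_of (Y Y' : T -> R) :
    cond_exp_of P G Y Y' -> measurable_fun setT Y.
  by case=> /measurable_int /measurable_EFinP.
have mU l := measurable_of _ _ (cU l).
have mV l := measurable_of _ _ (cV l).
have [_ hW'] := cond_exp_of_mom_endpoint (k := k) Ga' a'C cU cV.
have hW'' : is_cond_exp P G (fun x => mom_endpoint (a^~ x) (U x) (V x) k)
    (fun x => mom_endpoint (a'^~ x) (U' x) (V' x) k).
  apply: (is_cond_exp_ae_eq P HG _ _ _ hW').
  - by apply: measurable_mom_endpoint => // i; exact: (G_measurable_fun HG).
  - by apply: measurable_mom_endpoint => // i; exact: (G_measurable_fun HG).
  - by apply: filterS a'a => x ->.
apply: filterS2 a'a (is_cond_exp_unique P HG hW hW'') => x a'x ->.
by rewrite a'x.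
Qed.

Lemma is_cond_exp_mom_mul_degenerate {a : 'I_m.+1 -> T -> R} {C : R}
    {Y Z W : T -> mom R m} k :
  (forall i, G_measurable G (a i)) -> {ae P, forall x i, `|a i x| <= C} ->
  (forall x l, itv_ok (Y x l)) ->
  (forall l, cond_exp_of P G (fun x => (Y x l).1) (fun x => (Z x l).1)) ->
  (forall l, cond_exp_of P G (fun x => (Y x l).2) (fun x => (Z x l).2)) ->
  is_cond_exp_mom P G (fun x => mom_mul (fun i => (a i x, a i x)) (Y x)) W ->
  {ae P, forall x, W x k =
    (mom_endpoint (a^~ x) (fun l => (Z x l).1) (fun l => (Z x l).2) k,
     mom_endpoint (a^~ x) (fun l => (Z x l).2) (fun l => (Z x l).1) k)}.
Proof.
move=> Ga aC Yok c1 c2 hW; have [hW1 hW2] := hW k.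
have XY x := mom_mul_degenerate (a^~ x) (Y x) k (Yok x).
rewrite (_ : (fun x => _) = fun x =>
  mom_endpoint (a^~ x) (fun l => (Y x l).1) (fun l => (Y x l).2) k) in hW1;
  last by apply/funext => x; rewrite XY.
rewrite (_ : (fun x => _) = fun x =>
  mom_endpoint (a^~ x) (fun l => (Y x l).2) (fun l => (Y x l).1) k) in hW2;
  last by apply/funext => x; rewrite XY.
apply: filterS2 (is_cond_exp_mom_endpoint Ga aC c1 c2 hW1)
                (is_cond_exp_mom_endpoint Ga aC c2 c1 hW2) => x lo hi.
by rewrite [W x k]surjective_pairing lo hi.
Qed.

End moment_cond_exp.

Theorem lemmaE5 (d : measure_display) (T : measurableType d) (R : realType)
  (P : probability T R) (G : set (set T)) (m : nat)
  (a : 'I_m.+1 -> T -> R) (X Y : T -> mom R m) :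
  is_sub_sigma_alg G ->
  (* X is degenerate, G-measurable and almost surely bounded *)
  (forall w k, X w k = (a k w, a k w)) ->
  (forall k, G_measurable G (a k)) ->
  (exists C : R, {ae P, forall w, forall k, `|a k w| <= C}) ->
  (* Y is a random variable with values in M_I^(m), integrable endpoints *)
  (forall w k, itv_ok (Y w k)) ->
  (forall k, measurable_fun setT (fun w => (Y w k).1)) ->
  (forall k, measurable_fun setT (fun w => (Y w k).2)) ->
  (forall k, P.-integrable setT (fun w => ((Y w k).1)%:E)) ->
  (forall k, P.-integrable setT (fun w => ((Y w k).2)%:E)) ->
  (* for any versions of E[X (x) Y | G] and E[Y | G] *)
  forall W Z : T -> mom R m,
  is_cond_exp_mom P G (fun w => mom_mul (X w) (Y w)) W ->
  is_cond_exp_mom P G Y Z ->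
  {ae P, forall w, W w = mom_mul (X w) (Z w)}.
Proof.
move=> HG HX Ga [C aC] Yok _ _ iY1 iY2 W Z hW hZ.
have cY1 l : cond_exp_of P G (fun w => (Y w l).1) (fun w => (Z w l).1).
  by split; [exact: iY1 | exact: (hZ l).1].
have cY2 l : cond_exp_of P G (fun w => (Y w l).2) (fun w => (Z w l).2).
  by split; [exact: iY2 | exact: (hZ l).2].
have Zok : {ae P, forall w l, itv_ok (Z w l)}.
  apply: filter_forall => l.
  have := is_cond_exp_le P HG (iY1 l) (iY2 l) (Yok^~ l) (hZ l).1 (hZ l).2.
  by apply: filterS.
have XE : X = fun w i => (a i w, a i w).
  by apply/funext => w; apply/funext => i; exact: HX.
subst X.
apply: (filterS2 _ _ Zok (filter_forall _ (fun k =>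
  is_cond_exp_mom_mul_degenerate P HG k Ga aC Yok cY1 cY2 hW))).
move=> w Zw WZw; apply/funext => k.
by rewrite WZw mom_mul_degenerate.
Qed.
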